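(* Let $k\ge3$ be an integer and let $n$ be such that $x_k(n-1)\ge \frac{26}{\sqrt{\alpha_k}}$. Then $$1-\Theta_M(n)\ge \frac{\sqrt{\alpha_k}\,\pi^4}{36\,x_k(n+1)^3}.$$
   Context: Let $x_k(n):=\frac{\pi\sqrt{24n-(2k+2)}}{6}$, $\alpha_k:=\frac{5k+2}{2k+1}$, $M_k(n):=\frac{\pi^3\alpha_k}{18x_k(n)^2}I_2(\sqrt{\alpha_k}x_k(n))$ with $I_2$ the modified Bessel function of the first kind of order $2$, and $\Theta_M(n):=\frac{M_k(n-1)M_k(n+1)}{M_k(n)^2}$. *)

From Stdlib Require Import Reals.
From Coquelicot Require Import Coquelicot.
Open Scope R_scope.

Definition bessel_I2 (x : R) : R :=
  Series (fun m : nat => (x / 2) ^ (2 * m + 2) / (INR (Factorial.fact m) * INR (Factorial.fact (m + 2)))).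

(* x_k(n) = pi sqrt(24 n - (2k+2)) / 6, with n a real argument
   (we evaluate it at n-1, n, n+1). *)
Definition xk (k : nat) (n : R) : R :=
  PI * sqrt (24 * n - (2 * INR k + 2)) / 6.

Definition alphak (k : nat) : R := (5 * INR k + 2) / (2 * INR k + 1).

Definition Mk (k : nat) (n : R) : R :=
  PI ^ 3 * alphak k / (18 * (xk k n) ^ 2) * bessel_I2 (sqrt (alphak k) * xk k n).

Definition ThetaM (k : nat) (n : R) : R :=
  Mk k (n - 1) * Mk k (n + 1) / (Mk k n) ^ 2.

From Stdlib Require Import Reals Lra Lia Psatz.
From Coquelicot Require Import Coquelicot.
Open Scope R_scope.

(* With g(v) = sum_m v^m / (m! (m+2)!) one has I_2(y) = (y/2)^2 g((y/2)^2), so M_k(n) is a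
   constant multiple of g(u_n) where u_n = alpha_k x_k(n)^2 / 4 is an arithmetic progression of
   step h = alpha_k pi^2 / 6, and Theta_M(n) = g(u - h) g(u + h) / g(u)^2.  The series g solves
   v g'' + 3 g' = g; an integrating factor shows g'/g > 1/sqrt v - 5/(4 v) for v >= 1, which
   turns into the log-concavity estimate (ln g)'' <= -3 / (10 v^(3/2)) for v >= 169 (this is
   where x_k(n-1) >= 26/sqrt(alpha_k) enters).  Hence ln Theta_M(n) <= -3 h^2 / (10 (u+h)^(3/2)),
   and 1 - e^(-t) >= t / (1 + t) gives the bound. *)

Lemma PSeries_nonneg (a : nat -> R) (x : R) :
  ex_pseries a x -> (forall n, 0 <= a n) -> 0 <= x -> 0 <= PSeries a x.
Proof.
  intros Hex Ha Hx.
  rewrite <- (PSeries_const_0 x). apply Series_le.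
  - intro n. rewrite Rmult_0_l. split; [lra|]. apply Rmult_le_pos; [apply Ha | apply pow_le, Hx].
  - apply ex_series_ext with (fun n => scal (pow_n x n) (a n)); [|exact Hex].
    intro n. rewrite pow_n_pow. apply Rmult_comm.
Qed.

Lemma PSeries_pos (a : nat -> R) (x : R) :
  ex_pseries a x -> (forall n, 0 < a n) -> 0 <= x -> 0 < PSeries a x.
Proof.
  intros Hex Ha Hx.
  rewrite (PSeries_decr_1 a x Hex).
  assert (0 <= PSeries (PS_decr_1 a) x).
  { apply PSeries_nonneg; [|intro n; apply Rlt_le, Ha|exact Hx].
    apply ex_pseries_decr_1; [|exact Hex].
    destruct (Req_dec x 0) as [->|Hx0]; [now left|right].
    exists (/ x). apply Rinv_l, Hx0. }
  specialize (Ha 0%nat). nra.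
Qed.

Definition bessel_coef (m : nat) : R :=
  / (INR (Factorial.fact m) * INR (Factorial.fact (m + 2))).

Lemma bessel_coef_pos m : 0 < bessel_coef m.
Proof. apply Rinv_0_lt_compat, Rmult_lt_0_compat; apply INR_fact_lt_0. Qed.

Lemma bessel_coef_S m : bessel_coef (S m) = bessel_coef m / (INR (S m) * INR (m + 3)).
Proof.
  unfold bessel_coef.
  replace (S m + 2)%nat with (S (m + 2)) by lia.
  rewrite !fact_simpl, !mult_INR.
  replace (S (m + 2)) with (m + 3)%nat by lia.
  pose proof (INR_fact_neq_0 m). pose proof (INR_fact_neq_0 (m + 2)).
  assert (INR (S m) <> 0) by (apply not_0_INR; lia).
  assert (INR (m + 3) <> 0) by (apply not_0_INR; lia).
  field; auto.
Qed.

Lemma CV_radius_bessel_coef : CV_radius bessel_coef = p_infty.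
Proof.
  apply CV_radius_infinite_DAlembert.
  - intro m. apply Rgt_not_eq, bessel_coef_pos.
  - apply is_lim_seq_ext with (fun m => / (INR (S m) * INR (m + 3))).
    + intro m. pose proof (bessel_coef_pos m).
      assert (0 < INR (S m)) by (apply lt_0_INR; lia).
      assert (0 < INR (m + 3)) by (apply lt_0_INR; lia).
      rewrite bessel_coef_S, Rabs_pos_eq; [field; lra|].
      apply Rlt_le, Rdiv_lt_0_compat; [apply Rdiv_lt_0_compat|]; nra.
    + replace (Finite 0) with (Rbar_inv p_infty) by reflexivity.
      apply is_lim_seq_inv; [|discriminate].
      apply is_lim_seq_le_p_loc with INR; [|apply is_lim_seq_INR].
      exists 0%nat. intros m _. rewrite S_INR, plus_INR.
      pose proof (pos_INR m). simpl. nra.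
Qed.

Lemma CV_radius_PS_derive_infinite (a : nat -> R) :
  CV_radius a = p_infty -> CV_radius (PS_derive a) = p_infty.
Proof. intro Ha. rewrite CV_radius_derive. exact Ha. Qed.

Lemma ex_pseries_infinite_radius (a : nat -> R) (x : R) :
  CV_radius a = p_infty -> ex_pseries a x.
Proof. intro Ha. apply CV_radius_inside. rewrite Ha. exact I. Qed.

Lemma is_derive_PSeries_infinite_radius (a : nat -> R) (x : R) :
  CV_radius a = p_infty -> is_derive (PSeries a) x (PSeries (PS_derive a) x).
Proof. intro Ha. apply is_derive_PSeries. rewrite Ha. exact I. Qed.

Definition bessel_g : R -> R := PSeries bessel_coef.
Definition bessel_g' : R -> R := PSeries (PS_derive bessel_coef).
Definition bessel_g'' : R -> R := PSeries (PS_derive (PS_derive bessel_coef)).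

Lemma CV_radius_bessel_g' : CV_radius (PS_derive bessel_coef) = p_infty.
Proof. apply CV_radius_PS_derive_infinite, CV_radius_bessel_coef. Qed.

Lemma CV_radius_bessel_g'' : CV_radius (PS_derive (PS_derive bessel_coef)) = p_infty.
Proof. apply CV_radius_PS_derive_infinite, CV_radius_bessel_g'. Qed.

Lemma is_derive_bessel_g x : is_derive bessel_g x (bessel_g' x).
Proof. apply is_derive_PSeries_infinite_radius, CV_radius_bessel_coef. Qed.

Lemma is_derive_bessel_g' x : is_derive bessel_g' x (bessel_g'' x).
Proof. apply is_derive_PSeries_infinite_radius, CV_radius_bessel_g'. Qed.

Lemma bessel_g_pos x : 0 <= x -> 0 < bessel_g x.
Proof.
  apply PSeries_pos; [|apply bessel_coef_pos].
  apply ex_pseries_infinite_radius, CV_radius_bessel_coef.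
Qed.

Lemma bessel_g'_pos x : 0 <= x -> 0 < bessel_g' x.
Proof.
  apply PSeries_pos; [apply ex_pseries_infinite_radius, CV_radius_bessel_g'|].
  intro m. apply Rmult_lt_0_compat; [apply lt_0_INR; lia | apply bessel_coef_pos].
Qed.

Lemma bessel_coef_recurrence m :
  INR (S m) * (INR (S (S m)) * bessel_coef (S (S m)))
  + 3 * (INR (S (S m)) * bessel_coef (S (S m))) = bessel_coef (S m).
Proof.
  rewrite (bessel_coef_S (S m)), plus_INR, !S_INR. simpl.
  pose proof (pos_INR m). field. lra.
Qed.

Lemma bessel_g_ode x : x * bessel_g'' x + 3 * bessel_g' x = bessel_g x.
Proof.
  unfold bessel_g, bessel_g', bessel_g''.
  rewrite <- PSeries_incr_1, <- (PSeries_scal 3), <- PSeries_plus.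
  2: apply ex_pseries_incr_1, ex_pseries_infinite_radius, CV_radius_bessel_g''.
  2: apply ex_pseries_scal; [apply Rmult_comm | apply ex_pseries_infinite_radius, CV_radius_bessel_g'].
  apply PSeries_ext. intros [|m]; unfold PS_plus, PS_scal, PS_incr_1, PS_derive.
  - unfold plus, scal, zero; simpl; unfold mult, bessel_coef; simpl. lra.
  - apply bessel_coef_recurrence.
Qed.

Lemma bessel_I2_bessel_g y : bessel_I2 y = (y / 2) ^ 2 * bessel_g ((y / 2) ^ 2).
Proof.
  unfold bessel_I2, bessel_g, PSeries. rewrite <- Series_scal_l.
  apply Series_ext. intro m. unfold bessel_coef.
  rewrite pow_add, pow_mult. unfold Rdiv. ring.
Qed.

(* [exp (2 sqrt v) v^(7/4)] is an integrating factor: by the ODE, the derivative of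
   [(L g - g') F] with [L v = 1/sqrt v - 5/(4v)] no longer involves [g'] and is negative. *)
Lemma is_derive_bessel_g'_integrating_factor v : 0 < v ->
  is_derive
    (fun t => ((1 / sqrt t - 5 / (4 * t)) * bessel_g t - bessel_g' t) * exp (2 * sqrt t + 7 / 4 * ln t))
    v (- (15 / (16 * v ^ 2)) * bessel_g v * exp (2 * sqrt v + 7 / 4 * ln v)).
Proof.
  intro Hv.
  assert (Hs : 0 < sqrt v) by (apply sqrt_lt_R0; lra).
  assert (Hss : sqrt v * sqrt v = v) by (apply sqrt_sqrt; lra).
  assert (HL : is_derive (fun t => 1 / sqrt t - 5 / (4 * t)) v
                 (- 1 / (2 * v * sqrt v) + 5 / (4 * v * v))).
  { auto_derive; [repeat split; lra|]. rewrite Hss. field. lra. }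
  assert (HF : is_derive (fun t => exp (2 * sqrt t + 7 / 4 * ln t)) v
                 (exp (2 * sqrt v + 7 / 4 * ln v) * (1 / sqrt v + 7 / (4 * v)))).
  { auto_derive; [repeat split; lra|]. field. lra. }
  replace (- (15 / (16 * v ^ 2)) * bessel_g v * exp (2 * sqrt v + 7 / 4 * ln v)) with
    (((- 1 / (2 * v * sqrt v) + 5 / (4 * v * v)) * bessel_g v
      + (1 / sqrt v - 5 / (4 * v)) * bessel_g' v - bessel_g'' v)
     * exp (2 * sqrt v + 7 / 4 * ln v)
     + ((1 / sqrt v - 5 / (4 * v)) * bessel_g v - bessel_g' v)
       * (exp (2 * sqrt v + 7 / 4 * ln v) * (1 / sqrt v + 7 / (4 * v)))).
  2: { replace (bessel_g'' v) with ((bessel_g v - 3 * bessel_g' v) / v)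
         by (rewrite <- (bessel_g_ode v); field; lra).
       set (E := exp (2 * sqrt v + 7 / 4 * ln v)). set (s := sqrt v) in *.
       rewrite <- Hss. field. lra. }
  apply (Derive.is_derive_mult (fun t => (1 / sqrt t - 5 / (4 * t)) * bessel_g t - bessel_g' t)
           (fun t => exp (2 * sqrt t + 7 / 4 * ln t))); [|exact HF].
  apply (is_derive_minus (K := R_AbsRing) (V := R_NormedModule)
           (fun t => (1 / sqrt t - 5 / (4 * t)) * bessel_g t) bessel_g'); [|apply is_derive_bessel_g'].
  apply (Derive.is_derive_mult (fun t => 1 / sqrt t - 5 / (4 * t)) bessel_g);
    [exact HL | apply is_derive_bessel_g].
Qed.

Lemma bessel_g'_lower_bound v : 1 <= v ->
  (1 / sqrt v - 5 / (4 * v)) * bessel_g v < bessel_g' v.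
Proof.
  intro Hv.
  set (F := fun t => exp (2 * sqrt t + 7 / 4 * ln t)).
  set (Z := fun t => ((1 / sqrt t - 5 / (4 * t)) * bessel_g t - bessel_g' t) * F t).
  assert (HZ1 : Z 1 < 0).
  { unfold Z, F. rewrite sqrt_1.
    pose proof (bessel_g_pos 1 ltac:(lra)). pose proof (bessel_g'_pos 1 ltac:(lra)).
    pose proof (exp_pos (2 * 1 + 7 / 4 * ln 1)).
    nra. }
  assert (HZ : Z v < 0).
  { destruct (Req_dec v 1) as [->|Hne]; [exact HZ1|].
    destruct (MVT_cor2 Z (fun c => - (15 / (16 * c ^ 2)) * bessel_g c * F c) 1 v)
      as [c [Hc Hci]]; [lra| |].
    - intros c Hc. apply is_derive_Reals, is_derive_bessel_g'_integrating_factor. lra.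
    - pose proof (bessel_g_pos c ltac:(lra)). pose proof (exp_pos (2 * sqrt c + 7 / 4 * ln c)).
      assert (0 < 15 / (16 * c ^ 2)) by (apply Rdiv_lt_0_compat; nra).
      assert (0 < 15 / (16 * c ^ 2) * bessel_g c * F c) by (unfold F; apply Rmult_lt_0_compat; nra).
      nra. }
  unfold Z, F in HZ. pose proof (exp_pos (2 * sqrt v + 7 / 4 * ln v)). nra.
Qed.

(* The ODE gives [(ln g)'' = 1/v - 3 r/v - r^2] with [r = g'/g]; this decreases in [r >= 0],
   so the lower bound on [r] yields [(ln g)'' <= -1/(2 v^(3/2)) + 35/(16 v^2)]. *)
Lemma log_bessel_g_second_derivative_le v : 169 <= v ->
  (bessel_g'' v * bessel_g v - bessel_g' v * bessel_g' v) / bessel_g v ^ 2 <= - 3 / (10 * v * sqrt v).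
Proof.
  intro Hv.
  assert (Hs : 13 <= sqrt v).
  { rewrite <- (sqrt_square 13) by lra. apply sqrt_le_1_alt. lra. }
  assert (Hss : sqrt v * sqrt v = v) by (apply sqrt_sqrt; lra).
  pose proof (bessel_g_pos v ltac:(lra)) as Hg.
  pose proof (bessel_g'_lower_bound v ltac:(lra)) as Hlow.
  replace (bessel_g'' v) with ((bessel_g v - 3 * bessel_g' v) / v)
    by (rewrite <- (bessel_g_ode v); field; lra).
  set (r := bessel_g' v / bessel_g v).
  assert (Hr : 1 / sqrt v - 5 / (4 * v) <= r).
  { unfold r. apply Rmult_le_reg_r with (bessel_g v); [exact Hg|].
    unfold Rdiv at 3. rewrite Rmult_assoc, Rinv_l, Rmult_1_r; lra. }
  replace ((((bessel_g v - 3 * bessel_g' v) / v) * bessel_g v - bessel_g' v * bessel_g' v) / bessel_g v ^ 2)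
    with (1 / v - 3 * r / v - r ^ 2) by (unfold r; field; lra).
  clearbody r. set (s := sqrt v) in *. rewrite <- Hss in *.
  assert (Hrho : 0 <= 1 / s - 5 / (4 * (s * s))).
  { replace (1 / s - 5 / (4 * (s * s))) with ((4 * s - 5) / (4 * (s * s))) by (field; lra).
    apply Rdiv_le_0_compat; nra. }
  set (rho := 1 / s - 5 / (4 * (s * s))) in *.
  assert (Hrho_val : 1 / (s * s) - 3 * rho / (s * s) - rho ^ 2
                     = - 1 / (2 * s ^ 3) + 35 / (16 * s ^ 4)) by (unfold rho; field; lra).
  assert (Hmono : 1 / (s * s) - 3 * r / (s * s) - r ^ 2
                  <= 1 / (s * s) - 3 * rho / (s * s) - rho ^ 2).
  { assert (3 * rho / (s * s) <= 3 * r / (s * s)).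
    { apply Rmult_le_compat_r; [apply Rlt_le, Rinv_0_lt_compat; nra | lra]. }
    nra. }
  assert (Hfinal : - 1 / (2 * s ^ 3) + 35 / (16 * s ^ 4) <= - 3 / (10 * (s * s) * s)).
  { assert (- 1 / (2 * s ^ 3) + 35 / (16 * s ^ 4) - - 3 / (10 * (s * s) * s)
            = (175 - 16 * s) / (80 * s ^ 4)) by (field; lra).
    assert (0 < / (80 * s ^ 4)) by (apply Rinv_0_lt_compat; nra).
    assert ((175 - 16 * s) / (80 * s ^ 4) <= 0) by (unfold Rdiv; nra).
    lra. }
  lra.
Qed.

Lemma second_difference_le (f f' f'' : R -> R) (a h B : R) : 0 < h ->
  (forall x, a - h <= x <= a + h -> is_derive f x (f' x)) ->
  (forall x, a - h <= x <= a + h -> is_derive f' x (f'' x)) ->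
  (forall x, a - h <= x <= a + h -> f'' x <= B) ->
  f (a + h) + f (a - h) - 2 * f a <= B * h ^ 2.
Proof.
  intros Hh Hf Hf' HB.
  destruct (MVT_cor2 (fun x => f x - f (x - h)) (fun x => f' x - f' (x - h)) a (a + h))
    as [c [Hc Hca]]; [lra| |].
  - intros x Hx. apply is_derive_Reals.
    apply (is_derive_minus (K := R_AbsRing) (V := R_NormedModule) f (fun x => f (x - h)));
      [apply Hf; lra|].
    rewrite <- (Rmult_1_l (f' (x - h))).
    apply (is_derive_comp (K := R_AbsRing) (V := R_NormedModule) f (fun x => x - h) x (f' (x - h)) 1);
      [apply Hf; lra|].
    auto_derive; [exact I | ring].
  - destruct (MVT_cor2 f' f'' (c - h) c) as [e [He Hec]]; [lra| |].
    + intros x Hx. apply is_derive_Reals, Hf'. lra.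
    + replace (a + h - h) with a in Hc by ring.
      replace (c - (c - h)) with h in He by ring.
      replace (a + h - a) with h in Hc by ring.
      assert (f'' e * h * h <= B * h * h).
      { apply Rmult_le_compat_r; [lra|]. apply Rmult_le_compat_r; [lra|]. apply HB; lra. }
      nra.
Qed.

Lemma is_derive_ln_bessel_g x : 0 <= x ->
  is_derive (fun t => ln (bessel_g t)) x (bessel_g' x / bessel_g x).
Proof.
  intro Hx. pose proof (bessel_g_pos x Hx) as Hg.
  apply (is_derive_comp (K := R_AbsRing) (V := R_NormedModule) ln bessel_g x (/ bessel_g x) (bessel_g' x)).
  - apply is_derive_ln. exact Hg.
  - apply is_derive_bessel_g.
Qed.

Lemma log_bessel_g_second_difference_le u h : 0 < h -> 169 <= u - h ->
  ln (bessel_g (u + h)) + ln (bessel_g (u - h)) - 2 * ln (bessel_g u)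
  <= - 3 / (10 * (u + h) * sqrt (u + h)) * h ^ 2.
Proof.
  intros Hh Hu.
  apply (second_difference_le (fun t => ln (bessel_g t)) (fun t => bessel_g' t / bessel_g t)
           (fun t => (bessel_g'' t * bessel_g t - bessel_g' t * bessel_g' t) / bessel_g t ^ 2));
    [exact Hh| | |].
  - intros x Hx. apply is_derive_ln_bessel_g. lra.
  - intros x Hx. pose proof (bessel_g_pos x ltac:(lra)).
    apply (is_derive_div bessel_g' bessel_g); [apply is_derive_bessel_g' | apply is_derive_bessel_g | lra].
  - intros x Hx.
    eapply Rle_trans; [apply log_bessel_g_second_derivative_le; lra|].
    assert (0 < sqrt x) by (apply sqrt_lt_R0; lra).
    assert (sqrt x <= sqrt (u + h)) by (apply sqrt_le_1_alt; lra).
    assert (x * sqrt x <= (u + h) * sqrt (u + h)) by (apply Rmult_le_compat; lra).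
    replace (- 3 / (10 * x * sqrt x)) with (- (3 * / (10 * (x * sqrt x)))) by (field; lra).
    replace (- 3 / (10 * (u + h) * sqrt (u + h)))
      with (- (3 * / (10 * ((u + h) * sqrt (u + h))))) by (field; split; nra).
    apply Ropp_le_contravar, Rmult_le_compat_l; [lra|].
    apply Rinv_le_contravar; nra.
Qed.

Lemma one_sub_exp_ge x t : 0 <= t -> x <= - t -> t / (1 + t) <= 1 - exp x.
Proof.
  intros Ht Hx.
  assert (exp x <= exp (- t)).
  { destruct Hx as [Hlt | ->]; [left; apply exp_increasing, Hlt | apply Rle_refl]. }
  assert (1 + t <= exp t) by apply exp_ineq1_le.
  assert (exp (- t) * exp t = 1) by (rewrite <- exp_plus, Rplus_opp_l; apply exp_0).
  replace (t / (1 + t)) with (1 - 1 / (1 + t)) by (field; lra).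
  enough (exp (- t) <= 1 / (1 + t)) by lra.
  apply Rmult_le_reg_r with (1 + t); [lra|].
  replace (1 / (1 + t) * (1 + t)) with 1 by (field; lra).
  pose proof (exp_pos (- t)). nra.
Qed.

(* [t/(1+t) >= 5 t/12] for [t = 3 h^2/(10 (u+h)^(3/2)) <= 7/5], and [5/12 * 3/10 = 1/8]. *)
Lemma bessel_g_log_concavity_ratio u h : 0 < h -> h <= 7 -> 169 <= u - h ->
  h ^ 2 / (8 * ((u + h) * sqrt (u + h)))
  <= 1 - bessel_g (u - h) * bessel_g (u + h) / bessel_g u ^ 2.
Proof.
  intros Hh Hh7 Hu.
  assert (Hs : 13 <= sqrt (u + h)).
  { rewrite <- (sqrt_square 13) by lra. apply sqrt_le_1_alt. lra. }
  set (S3 := (u + h) * sqrt (u + h)).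
  assert (HS3 : 2197 <= S3) by (unfold S3; nra).
  set (t := 3 * h ^ 2 / (10 * S3)).
  assert (Ht : t * (10 * S3) = 3 * h ^ 2) by (unfold t; field; lra).
  pose proof (bessel_g_pos u ltac:(lra)). pose proof (bessel_g_pos (u - h) ltac:(lra)).
  pose proof (bessel_g_pos (u + h) ltac:(lra)).
  assert (Hratio : bessel_g (u - h) * bessel_g (u + h) / bessel_g u ^ 2
            = exp (ln (bessel_g (u + h)) + ln (bessel_g (u - h)) - 2 * ln (bessel_g u))).
  { replace (ln (bessel_g (u + h)) + ln (bessel_g (u - h)) - 2 * ln (bessel_g u))
      with (ln (bessel_g (u + h)) + ln (bessel_g (u - h)) + - (ln (bessel_g u) + ln (bessel_g u)))
      by ring.
    rewrite exp_plus, exp_Ropp, !exp_plus, !exp_ln by lra. field. lra. }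
  rewrite Hratio.
  eapply Rle_trans; [|apply one_sub_exp_ge with (t := t)].
  - assert (0 <= t) by nra.
    assert (t <= 7 / 5) by nra.
    apply Rmult_le_reg_r with (8 * S3 * (1 + t)); [nra|].
    replace (h ^ 2 / (8 * S3) * (8 * S3 * (1 + t))) with (h ^ 2 * (1 + t)) by (field; lra).
    replace (t / (1 + t) * (8 * S3 * (1 + t))) with (8 * S3 * t) by (field; lra).
    nra.
  - nra.
  - eapply Rle_trans; [apply log_bessel_g_second_difference_le; lra|].
    right. unfold t, S3. field. split; lra.
Qed.

Lemma alphak_pos k : 0 < alphak k.
Proof. unfold alphak. pose proof (pos_INR k). apply Rdiv_lt_0_compat; lra. Qed.

Lemma alphak_le k : alphak k <= 5 / 2.
Proof.
  unfold alphak. pose proof (pos_INR k).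
  apply Rmult_le_reg_r with (2 * INR k + 1); [lra|].
  replace ((5 * INR k + 2) / (2 * INR k + 1) * (2 * INR k + 1)) with (5 * INR k + 2) by (field; lra).
  lra.
Qed.

Definition bessel_arg (k : nat) (t : R) : R :=
  alphak k * PI ^ 2 * (24 * t - (2 * INR k + 2)) / 144.

Definition bessel_step (k : nat) : R := alphak k * PI ^ 2 / 6.

Lemma bessel_step_pos k : 0 < bessel_step k.
Proof.
  unfold bessel_step. pose proof (alphak_pos k). pose proof PI_RGT_0.
  apply Rdiv_lt_0_compat; [apply Rmult_lt_0_compat, pow_lt|]; lra.
Qed.

Lemma bessel_step_le k : bessel_step k <= 7.
Proof.
  unfold bessel_step. pose proof (alphak_pos k). pose proof (alphak_le k).
  pose proof PI_RGT_0. pose proof PI_4.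
  assert (PI ^ 2 <= 16) by nra.
  assert (alphak k * PI ^ 2 <= 40) by nra.
  lra.
Qed.

Lemma bessel_arg_succ k t : bessel_arg k (t + 1) = bessel_arg k t + bessel_step k.
Proof. unfold bessel_arg, bessel_step. field. Qed.

Lemma bessel_arg_pred k t : bessel_arg k (t - 1) = bessel_arg k t - bessel_step k.
Proof. unfold bessel_arg, bessel_step. field. Qed.

Lemma bessel_arg_xk k t : 0 <= 24 * t - (2 * INR k + 2) ->
  bessel_arg k t = (sqrt (alphak k) * xk k t / 2) ^ 2.
Proof.
  intro Ht. unfold bessel_arg, xk.
  rewrite <- (sqrt_sqrt (alphak k)) at 1 by apply Rlt_le, alphak_pos.
  rewrite <- (sqrt_sqrt (24 * t - (2 * INR k + 2))) at 1 by exact Ht.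
  field.
Qed.

Lemma Mk_bessel_g k t : 0 < 24 * t - (2 * INR k + 2) ->
  Mk k t = PI ^ 3 * alphak k ^ 2 / 72 * bessel_g (bessel_arg k t).
Proof.
  intro Ht.
  assert (Hx : 0 < xk k t).
  { unfold xk. pose proof PI_RGT_0. pose proof (sqrt_lt_R0 _ Ht). nra. }
  assert (Harg : bessel_arg k t = alphak k * xk k t ^ 2 / 4).
  { rewrite bessel_arg_xk by lra.
    rewrite <- (sqrt_sqrt (alphak k)) at 2 by apply Rlt_le, alphak_pos. field. }
  unfold Mk. rewrite bessel_I2_bessel_g, <- bessel_arg_xk by lra.
  set (g0 := bessel_g (bessel_arg k t)). rewrite Harg. field. lra.
Qed.

Lemma ThetaM_bessel_g k t : 0 < 24 * (t - 1) - (2 * INR k + 2) ->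
  ThetaM k t = bessel_g (bessel_arg k t - bessel_step k) * bessel_g (bessel_arg k t + bessel_step k)
               / bessel_g (bessel_arg k t) ^ 2.
Proof.
  intro Ht. unfold ThetaM.
  rewrite !Mk_bessel_g, bessel_arg_pred, bessel_arg_succ by lra.
  pose proof PI_RGT_0. pose proof (alphak_pos k).
  assert (0 < PI ^ 3 * alphak k ^ 2 / 72)
    by (apply Rdiv_lt_0_compat; [apply Rmult_lt_0_compat; apply pow_lt|]; lra).
  assert (0 < bessel_g (bessel_arg k t)).
  { apply bessel_g_pos. unfold bessel_arg. apply Rdiv_le_0_compat; [|lra].
    apply Rmult_le_pos; [apply Rmult_le_pos; [lra | apply pow_le; lra] | lra]. }
  field. lra.
Qed.

Lemma xk_lower_bound_bessel_arg k t : xk k t >= 26 / sqrt (alphak k) ->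
  0 < 24 * t - (2 * INR k + 2) /\ 169 <= bessel_arg k t.
Proof.
  intro Hx.
  pose proof (alphak_pos k) as Hal.
  assert (Hsa : 0 < sqrt (alphak k)) by (apply sqrt_lt_R0; exact Hal).
  assert (Hprod : 26 <= sqrt (alphak k) * xk k t).
  { apply Rmult_le_reg_l with (/ sqrt (alphak k)); [apply Rinv_0_lt_compat; exact Hsa|].
    rewrite <- Rmult_assoc, Rinv_l, Rmult_1_l by lra. unfold Rdiv in Hx. lra. }
  assert (Ht : 0 < 24 * t - (2 * INR k + 2)).
  { destruct (Rlt_or_le 0 (24 * t - (2 * INR k + 2))) as [Hlt | Hle]; [exact Hlt|].
    unfold xk in Hprod. rewrite (sqrt_neg_0 (24 * t - _)) in Hprod by exact Hle. lra. }
  split; [exact Ht|].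
  rewrite bessel_arg_xk by lra. nra.
Qed.

Lemma xk_cube_bessel_arg k t : 0 < 24 * t - (2 * INR k + 2) ->
  sqrt (alphak k) * PI ^ 4 / (36 * xk k t ^ 3)
  = bessel_step k ^ 2 / (8 * (bessel_arg k t * sqrt (bessel_arg k t))).
Proof.
  intro Ht.
  pose proof (alphak_pos k) as Hal.
  assert (Hsa : 0 < sqrt (alphak k)) by (apply sqrt_lt_R0; exact Hal).
  assert (Hx : 0 < xk k t).
  { unfold xk. pose proof PI_RGT_0. pose proof (sqrt_lt_R0 _ Ht). nra. }
  rewrite bessel_arg_xk, sqrt_pow2 by nra.
  unfold bessel_step.
  assert (Hsq : alphak k = sqrt (alphak k) * sqrt (alphak k)) by (rewrite sqrt_sqrt; lra).
  set (sa := sqrt (alphak k)) in *. set (x := xk k t) in *.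
  rewrite Hsq. pose proof PI_RGT_0. field. lra.
Qed.

Theorem lemma4p3 (k n : nat) :
  (3 <= k)%nat ->
  xk k (INR n - 1) >= 26 / sqrt (alphak k) ->
  1 - ThetaM k (INR n) >= sqrt (alphak k) * PI ^ 4 / (36 * (xk k (INR n + 1)) ^ 3).
Proof.
  intros _ Hx.
  destruct (xk_lower_bound_bessel_arg k (INR n - 1) Hx) as [Hpos H169].
  rewrite bessel_arg_pred in H169.
  rewrite ThetaM_bessel_g, xk_cube_bessel_arg, bessel_arg_succ by lra.
  apply Rle_ge, bessel_g_log_concavity_ratio; [apply bessel_step_pos | apply bessel_step_le | exact H169].
Qed.
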